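(* Let $(\mathcal{C},\Sigma,\mathscr{N})$ be an $n$-angulated category. Let $A_1\xrightarrow{\alpha_1}A_2\xrightarrow{\alpha_2}\cdots\xrightarrow{\alpha_{n-1}}A_n\xrightarrow{\alpha_n}\Sigma A_1$ and $A_1\xrightarrow{\beta_1}B_2\xrightarrow{\beta_2}B_3\to\cdots\xrightarrow{\beta_{n-1}}B_n\xrightarrow{\beta_n}\Sigma A_1$ be $n$-angles and $\varphi_2\colon A_2\to B_2$ a morphism with $\varphi_2\alpha_1=\beta_1$. Suppose $\varphi_3,\dots,\varphi_n$ are morphisms $\varphi_i\colon A_i\to B_i$ such that $(1_{A_1},\varphi_2,\dots,\varphi_n)$ is a morphism of $n$-$\Sigma$-sequences whose mapping cone is an $n$-angle (such $\varphi_i$ exist by (N4)). Then the $n$-$\Sigma$-sequence $$A_2\xrightarrow{\left[\begin{smallmatrix}-\alpha_2\\ \varphi_2\end{smallmatrix}\right]}A_3\oplus B_2\xrightarrow{\left[\begin{smallmatrix}\alpha_3&0\\ \varphi_3&\beta_2\end{smallmatrix}\right]}A_4\oplus B_3\xrightarrow{\left[\begin{smallmatrix}\alpha_4&0\\ -\varphi_4&\beta_3\end{smallmatrix}\right]}\cdots\xrightarrow{\left[\begin{smallmatrix}\alpha_{n-1}&0\\ (-1)^n\varphi_{n-1}&\beta_{n-2}\end{smallmatrix}\right]}A_n\oplus B_{n-1}\xrightarrow{\left[\begin{smallmatrix}(-1)^{n+1}\varphi_n&\beta_{n-1}\end{smallmatrix}\right]}B_n\xrightarrow{\Sigma\alpha_1\circ\beta_n}\Sigma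 A_2,$$ in which for $3\le k\le n-1$ the map $A_k\oplus B_{k-1}\to A_{k+1}\oplus B_k$ is $\left[\begin{smallmatrix}\alpha_k&0\\ (-1)^{k+1}\varphi_k&\beta_{k-1}\end{smallmatrix}\right]$, is an $n$-angle.
   Context: $\mathcal{C}$ is an additive category, $\Sigma$ an automorphism of $\mathcal{C}$, $n\ge3$. An $n$-$\Sigma$-sequence is a diagram $A_1\xrightarrow{\alpha_1}A_2\to\cdots\xrightarrow{\alpha_{n-1}}A_n\xrightarrow{\alpha_n}\Sigma A_1$; its left rotation is $A_2\xrightarrow{\alpha_2}\cdots\xrightarrow{\alpha_n}\Sigma A_1\xrightarrow{(-1)^n\Sigma\alpha_1}\Sigma A_2$. A morphism $(\varphi_1,\dots,\varphi_n)\colon A_\bullet\to B_\bullet$ consists of $\varphi_i\colon A_i\to B_i$ with $\varphi_{i+1}\alpha_i=\beta_i\varphi_i$ ($1\le i\le n-1$) and $\Sigma\varphi_1\alpha_n=\beta_n\varphi_n$; isomorphisms have all $\varphi_i$ invertible. Direct sums are termwise; $A_\bullet$ is a direct summand of $B_\bullet$ if there are morphisms $\varphi\colon A_\bullet\to B_\bullet$, $\psi\colon B_\bullet\to A_\bullet$ with $\psi_i\varphi_i=1$. The mapping cone of a morphism $(\varphi_1,\dots,\varphi_n)\colon A_\bullet\to B_\bullet$ is the $n$-$\Sigma$-sequence $A_2\oplus B_1\xrightarrow{\left[\begin{smallmatrix}-\alpha_2&0\\ \varphi_2&\beta_1\end{smallmatrix}\right]}A_3\oplus B_2\xrightarrow{\left[\begin{smallmatrix}-\alpha_3&0\\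 \varphi_3&\beta_2\end{smallmatrix}\right]}\cdots\xrightarrow{\left[\begin{smallmatrix}-\alpha_n&0\\ \varphi_n&\beta_{n-1}\end{smallmatrix}\right]}\Sigma A_1\oplus B_n\xrightarrow{\left[\begin{smallmatrix}-\Sigma\alpha_1&0\\ \Sigma\varphi_1&\beta_n\end{smallmatrix}\right]}\Sigma A_2\oplus\Sigma B_1$. An $n$-angulated category is a triple $(\mathcal{C},\Sigma,\mathscr{N})$ where $\mathscr{N}$ is a collection of $n$-$\Sigma$-sequences (called $n$-angles) satisfying: (N1)(a) $\mathscr{N}$ is closed under direct sums, direct summands and isomorphisms; (b) $A\xrightarrow{1}A\to0\to\cdots\to0\to\Sigma A$ is in $\mathscr{N}$ for every $A$; (c) every morphism $A_1\to A_2$ is the first morphism of some sequence in $\mathscr{N}$. (N2) a sequence is in $\mathscr{N}$ iff its left rotation is. (N3) given $A_\bullet,B_\bullet\in\mathscr{N}$ and $\varphi_1,\varphi_2$ with $\varphi_2\alpha_1=\beta_1\varphi_1$, there exist $\varphi_3,\dots,\varphi_n$ making $(\varphi_1,\dots,\varphi_n)$ a morphism. (N4) in the situation of (N3), $\varphi_3,\dots,\varphi_n$ can be chosen so that the mapping cone is in $\mathscr{N}$. *)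

From HB Require Import structures.
From mathcomp Require Import all_boot all_algebra.
From Stdlib Require Import ClassicalEpsilon.

Set Implicit Arguments.
Unset Strict Implicit.
Unset Printing Implicit Defensive.
Import GRing.Theory.

Record addcat := AddCat {
  Ob :> Type;
  HomC : Ob -> Ob -> zmodType;
  comp : forall A B D : Ob, HomC B D -> HomC A B -> HomC A D;
  idm : forall A : Ob, HomC A A;
  compA : forall A B D E (h : HomC D E) (g : HomC B D) (f : HomC A B),
      comp h (comp g f) = comp (comp h g) f;
  comp1f : forall A B (f : HomC A B), comp (idm B) f = f;
  compf1 : forall A B (f : HomC A B), comp f (idm A) = f;
  compDl : forall A B D (g g' : HomC B D) (f : HomC A B),
      comp (g + g')%R f = (comp g f + comp g' f)%R;
  compDr : forall A B D (g : HomC B D) (f f' : HomC A B),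
      comp g (f + f')%R = (comp g f + comp g f')%R;
  zob : Ob;
  zob_id : idm zob = 0%R;
  bsum : Ob -> Ob -> Ob;
  binl : forall A B, HomC A (bsum A B);
  binr : forall A B, HomC B (bsum A B);
  bprl : forall A B, HomC (bsum A B) A;
  bprr : forall A B, HomC (bsum A B) B;
  bprl_inl : forall A B, comp (bprl A B) (binl A B) = idm A;
  bprr_inr : forall A B, comp (bprr A B) (binr A B) = idm B;
  bprl_inr : forall A B, comp (bprl A B) (binr A B) = 0%R;
  bprr_inl : forall A B, comp (bprr A B) (binl A B) = 0%R;
  bsum_id : forall A B,
      (comp (binl A B) (bprl A B) + comp (binr A B) (bprr A B))%R = idm (bsum A B)
}.

Arguments HomC {c} : rename.
Arguments comp {c A B D} : rename.
Arguments idm {c} : rename.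
Arguments zob {c} : rename.
Arguments bsum {c} : rename.
Arguments binl {c A B} : rename.
Arguments binr {c A B} : rename.
Arguments bprl {c A B} : rename.
Arguments bprr {c A B} : rename.

Notation "g ∘ f" := (comp g f) (at level 40, left associativity).

Record autom (C : addcat) := Autom {
  SO : C -> C;
  SM : forall A B : C, HomC A B -> HomC (SO A) (SO B);
  SM_id : forall A : C, SM (idm A) = idm (SO A);
  SM_comp : forall (A B D : C) (g : HomC B D) (f : HomC A B),
      SM (g ∘ f) = SM g ∘ SM f;
  SM_add : forall (A B : C) (f g : HomC A B), SM (f + g)%R = (SM f + SM g)%R;
  SO_bij : bijective SO;
  SM_bij : forall A B : C, bijective (@SM A B)
}.
Arguments SO {C} s _ : rename.
Arguments SM {C} s {A B} _ : rename.

(* castH f is f transported to HomC A' B' when A = A' and B = B'         *)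
(* (and 0 otherwise); it is only ever used where these equalities hold, *)
(* to get around the non-convertibility of index expressions such as    *)
(* n.-1.+1 and n.                                                       *)
Definition hcast (C : addcat) (A B A' B' : C) (eA : A = A') (eB : B = B')
    (f : HomC A B) : HomC A' B' :=
  match eA in _ = X return HomC X B' with
  | erefl => match eB in _ = Y return HomC A Y with erefl => f end
  end.

Definition castH (C : addcat) (A B A' B' : C) (f : HomC A B) : HomC A' B' :=
  match excluded_middle_informative (A = A'),
        excluded_middle_informative (B = B') with
  | left eA, left eB => hcast eA eB f
  | _, _ => 0%R
  end.
Arguments castH {C A B A' B'} f.

Definition sgn (V : zmodType) (b : bool) (x : V) : V := if b then (- x)%R else x.

Section NSseq.
Variables (C : addcat) (S : autom C) (n : nat).

Definition mat (P Q R T : C) (a : HomC P R) (b : HomC Q R) (c : HomC P T)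
    (d : HomC Q T) : HomC (bsum P Q) (bsum R T) :=
  (binl ∘ (a ∘ bprl + b ∘ bprr) + binr ∘ (c ∘ bprl + d ∘ bprr))%R.

(* Objects are sob i for 1 <= i <= n (position n written n.-1.+1),
   maps smor i : A_i -> A_{i+1} for 1 <= i <= n-1, and slst : A_n -> Sigma A_1.
   Values at other indices are irrelevant junk. *)
Record nSseq := NSseq {
  sob : nat -> C;
  smor : forall i, HomC (sob i) (sob i.+1);
  slst : HomC (sob n.-1.+1) (SO S (sob 1))
}.

Definition is_morph (X Y : nSseq) (phi : forall i, HomC (sob X i) (sob Y i)) :=
  (forall i, 1 <= i <= n.-1 -> phi i.+1 ∘ smor X i = smor Y i ∘ phi i) /\
  SM S (phi 1) ∘ slst X = slst Y ∘ phi n.-1.+1.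

Definition invertible (A B : C) (f : HomC A B) :=
  exists g : HomC B A, g ∘ f = idm A /\ f ∘ g = idm B.

Definition is_iso (X Y : nSseq) (phi : forall i, HomC (sob X i) (sob Y i)) :=
  is_morph phi /\ forall i, 1 <= i <= n -> invertible (phi i).

(* termwise direct sum; last map composed with the canonical
   Sigma A_1 (+) Sigma B_1 ~= Sigma (A_1 (+) B_1) *)
Definition dsum (X Y : nSseq) : nSseq :=
  @NSseq (fun i => bsum (sob X i) (sob Y i))
        (fun i => mat (smor X i) 0%R 0%R (smor Y i))
        (SM S binl ∘ slst X ∘ bprl + SM S binr ∘ slst Y ∘ bprr)%R.

Definition summand (X Y : nSseq) :=
  exists (phi : forall i, HomC (sob X i) (sob Y i))
         (psi : forall i, HomC (sob Y i) (sob X i)),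
    [/\ is_morph phi, is_morph psi &
        forall i, 1 <= i <= n -> psi i ∘ phi i = idm (sob X i)].

Definition triv (A : C) : nSseq :=
  @NSseq (fun i => if i <= 2 then A else zob)
        (fun i => if i == 1 then castH (idm A) else 0%R)
        0%R.

Definition rob (X : nSseq) (i : nat) : C :=
  if i <= n.-1 then sob X i.+1 else SO S (sob X 1).

Definition rot (X : nSseq) : nSseq :=
  @NSseq (rob X)
        (fun i => if i.+1 <= n.-1 then castH (smor X i.+1)
                  else if i == n.-1 then castH (slst X) else 0%R)
        (castH (sgn (odd n) (SM S (smor X 1)))).

Definition cob (X Y : nSseq) (i : nat) : C :=
  if i <= n.-1 then bsum (sob X i.+1) (sob Y i)
  else bsum (SO S (sob X 1)) (sob Y i).

Definition clst0 (X Y : nSseq) (phi : forall i, HomC (sob X i) (sob Y i)) :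
    HomC (bsum (SO S (sob X 1)) (sob Y n.-1.+1)) (SO S (bsum (sob X 2) (sob Y 1))) :=
  (SM S binl ∘ (- SM S (smor X 1)) ∘ bprl +
   SM S binr ∘ (SM S (phi 1) ∘ bprl + slst Y ∘ bprr))%R.

Definition cone (X Y : nSseq) (phi : forall i, HomC (sob X i) (sob Y i)) : nSseq :=
  @NSseq (cob X Y)
        (fun i => if i.+1 <= n.-1 then
                    castH (mat (- smor X i.+1)%R 0%R (phi i.+1) (smor Y i))
                  else if i == n.-1 then
                    castH (mat (- (castH (slst X) : HomC (sob X i.+1) (SO S (sob X 1))))%R
                               0%R (phi i.+1) (smor Y i))
                  else 0%R)
        (castH (clst0 phi)).

Record nangulated (N : nSseq -> Prop) : Prop := {
  N1a_sum : forall X Y, N X -> N Y -> N (dsum X Y);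
  N1a_summand : forall X Y, N Y -> summand X Y -> N X;
  N1a_iso : forall X Y (phi : forall i, HomC (sob X i) (sob Y i)), N X -> is_iso phi -> N Y;
  N1b : forall A : C, N (triv A);
  N1c : forall (A1 A2 : C) (f : HomC A1 A2), exists X,
      [/\ N X, sob X 1 = A1, sob X 2 = A2 & castH (smor X 1) = f];
  N2 : forall X, N X <-> N (rot X);
  N3 : forall X Y, N X -> N Y ->
      forall (f1 : HomC (sob X 1) (sob Y 1)) (f2 : HomC (sob X 2) (sob Y 2)),
      f2 ∘ smor X 1 = smor Y 1 ∘ f1 ->
      exists phi : forall i, HomC (sob X i) (sob Y i),
        [/\ phi 1 = f1, phi 2 = f2 & is_morph phi];
  N4 : forall X Y, N X -> N Y ->
      forall (f1 : HomC (sob X 1) (sob Y 1)) (f2 : HomC (sob X 2) (sob Y 2)),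
      f2 ∘ smor X 1 = smor Y 1 ∘ f1 ->
      exists phi : forall i, HomC (sob X i) (sob Y i),
        [/\ phi 1 = f1, phi 2 = f2, is_morph phi & N (cone phi)]
}.

(* Position 1: A_2; position k (2 <= k <= n-1): A_{k+1} (+) B_k; position n: B_n. *)
Definition l4ob (X Y : nSseq) (k : nat) : C :=
  if k == 1 then sob X 2
  else if k <= n.-1 then bsum (sob X k.+1) (sob Y k) else sob Y k.

Definition l4seq (X Y : nSseq) (phi : forall i, HomC (sob X i) (sob Y i)) : nSseq :=
  @NSseq (l4ob X Y)
    (fun k =>
       if k == 1 then
         castH (binl ∘ (- smor X 2) + binr ∘ phi 2
                  : HomC (sob X 2) (bsum (sob X 3) (sob Y 2)))%R
       else if k.+1 <= n.-1 then
         castH (mat (smor X k.+1) 0%R (sgn (odd k) (phi k.+1)) (smor Y k))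
       else if k == n.-1 then
         castH (sgn (~~ odd n) (phi k.+1) ∘ bprl + smor Y k ∘ bprr
                  : HomC (bsum (sob X k.+1) (sob Y k)) (sob Y k.+1))%R
       else 0%R)
    (castH (SM S (smor X 1) ∘
              (castH (slst Y) : HomC (sob Y n.-1.+1) (SO S (sob X 1))))).

End NSseq.

From Pilot Require Import Defs.
From mathcomp Require Import all_boot all_algebra.
From Stdlib Require Import ClassicalEpsilon ProofIrrelevance.

Set Implicit Arguments.
Unset Strict Implicit.
Unset Printing Implicit Defensive.
Import GRing.Theory.

(* The displayed sequence is a direct summand of the mapping cone of
   (1, φ_2, ..., φ_n), hence an n-angle by (N1).  It embeds into the cone by
   [1; 0] : A_2 -> A_2 ⊕ A_1, by diag((-1)^k, 1) on A_{k+1} ⊕ B_k, and by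
   [-(Σφ_1^-1) β_n; 1] : B_n -> ΣA_1 ⊕ B_n; a retraction is given by
   [1, α_1 φ_1^-1], the same diagonal signs, and the projection onto B_n.
   That both families of maps commute with the differentials only uses
   α_2 α_1 = 0 and β_n β_(n-1) = 0, which hold in any n-angle by comparing it,
   via (N3), with a trivial n-angle. *)

Section AdditiveCategory.
Local Open Scope ring_scope.
Variable C : addcat.
Implicit Types A B D : C.

Lemma comp0r A B D (g : HomC B D) : g ∘ (0 : HomC A B) = 0.
Proof. by apply: (addrI (g ∘ 0)); rewrite -Defs.compDr !addr0. Qed.

Lemma comp0l A B D (f : HomC A B) : (0 : HomC B D) ∘ f = 0.
Proof. by apply: (addrI (0 ∘ f)); rewrite -Defs.compDl !addr0. Qed.

Lemma compNl A B D (g : HomC B D) (f : HomC A B) : (- g) ∘ f = - (g ∘ f).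
Proof. by apply: (addrI (g ∘ f)); rewrite -Defs.compDl !subrr comp0l. Qed.

Lemma compNr A B D (g : HomC B D) (f : HomC A B) : g ∘ (- f) = - (g ∘ f).
Proof. by apply: (addrI (g ∘ f)); rewrite -Defs.compDr !subrr comp0r. Qed.

(* The biproduct identities in left-associated form, so that they apply to the
   normal form produced by [hom_normalize] below. *)
Lemma comp_bprl_binl A B D (f : HomC A D) : f ∘ @bprl C A B ∘ binl = f.
Proof. by rewrite -Defs.compA bprl_inl Defs.compf1. Qed.

Lemma comp_bprl_binr A B D (f : HomC A D) : f ∘ @bprl C A B ∘ binr = 0.
Proof. by rewrite -Defs.compA bprl_inr comp0r. Qed.

Lemma comp_bprr_binr A B D (f : HomC B D) : f ∘ @bprr C A B ∘ binr = f.
Proof. by rewrite -Defs.compA bprr_inr Defs.compf1. Qed.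

Lemma comp_bprr_binl A B D (f : HomC B D) : f ∘ @bprr C A B ∘ binl = 0.
Proof. by rewrite -Defs.compA bprr_inl comp0r. Qed.

Lemma hom_bsum_ext A B D (f g : HomC A (bsum B D)) :
  bprl ∘ f = bprl ∘ g -> bprr ∘ f = bprr ∘ g -> f = g.
Proof.
move=> eql eqr; rewrite -(Defs.comp1f f) -(Defs.comp1f g) -bsum_id.
by rewrite !Defs.compDl -!Defs.compA eql eqr.
Qed.

Lemma bsum_hom_ext A B D (f g : HomC (bsum A B) D) :
  f ∘ binl = g ∘ binl -> f ∘ binr = g ∘ binr -> f = g.
Proof.
move=> eql eqr; rewrite -(Defs.compf1 f) -(Defs.compf1 g) -bsum_id.
by rewrite !Defs.compDr !Defs.compA eql eqr.
Qed.

Lemma castH_id A B (f : HomC A B) : castH f = f.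
Proof.
rewrite /castH; case: excluded_middle_informative => [eA|]; last by case.
case: excluded_middle_informative => [eB|]; last by case.
by rewrite (proof_irrelevance _ eA erefl) (proof_irrelevance _ eB erefl).
Qed.

Lemma castH0 A B A' B' : (castH (0 : HomC A B) : HomC A' B') = 0.
Proof.
rewrite /castH; case: excluded_middle_informative => [eA|] //.
case: excluded_middle_informative => [eB|] //.
by case: A' / eA; case: B' / eB.
Qed.

Lemma castH_comp A B D A' B' D' (g : HomC B D) (f : HomC A B) :
  A = A' -> B = B' -> D = D' ->
  (castH g : HomC B' D') ∘ (castH f : HomC A' B') = castH (g ∘ f).
Proof. by move=> eA eB eD; subst; rewrite !castH_id. Qed.

Lemma castH_idmE A A' (f : HomC A A) :
  A = A' -> f = idm A -> (castH f : HomC A' A') = idm A'.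
Proof. by move=> eA ->; subst; rewrite castH_id. Qed.

Lemma castH_idmK A B : A = B -> (castH (idm A) : HomC A B) ∘ castH (idm B) = idm B.
Proof. by move=> eA; subst; rewrite !castH_id Defs.comp1f. Qed.

Lemma castH_compl A B B' (f : HomC A B) :
  B = B' -> (castH f : HomC A B') = castH (idm B) ∘ f.
Proof. by move=> eB; subst; rewrite !castH_id Defs.comp1f. Qed.

End AdditiveCategory.

Section Suspension.
Local Open Scope ring_scope.
Variables (C : addcat) (S : autom C).
Implicit Types A B D : C.

Lemma SM0 A B : SM S (0 : HomC A B) = 0.
Proof. by apply: (addrI (SM S 0)); rewrite -SM_add !addr0. Qed.

Lemma SM_castH A B A' B' (f : HomC A B) :
  A = A' -> B = B' -> SM S (castH f : HomC A' B') = castH (SM S f).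
Proof. by move=> eA eB; subst; rewrite !castH_id. Qed.

Lemma SM_bprl_binl A B : SM S (@bprl C A B) ∘ SM S binl = idm _.
Proof. by rewrite -SM_comp bprl_inl SM_id. Qed.

Lemma SM_bprl_binr A B : SM S (@bprl C A B) ∘ SM S binr = 0.
Proof. by rewrite -SM_comp bprl_inr SM0. Qed.

Lemma SM_bprr_binr A B : SM S (@bprr C A B) ∘ SM S binr = idm _.
Proof. by rewrite -SM_comp bprr_inr SM_id. Qed.

Lemma SM_bprr_binl A B : SM S (@bprr C A B) ∘ SM S binl = 0.
Proof. by rewrite -SM_comp bprr_inl SM0. Qed.

Lemma comp_SM_bprl_binl A B D (f : HomC (SO S A) D) :
  f ∘ SM S (@bprl C A B) ∘ SM S binl = f.
Proof. by rewrite -Defs.compA SM_bprl_binl Defs.compf1. Qed.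

Lemma comp_SM_bprl_binr A B D (f : HomC (SO S A) D) :
  f ∘ SM S (@bprl C A B) ∘ SM S binr = 0.
Proof. by rewrite -Defs.compA SM_bprl_binr comp0r. Qed.

Lemma comp_SM_bprr_binr A B D (f : HomC (SO S B) D) :
  f ∘ SM S (@bprr C A B) ∘ SM S binr = f.
Proof. by rewrite -Defs.compA SM_bprr_binr Defs.compf1. Qed.

Lemma comp_SM_bprr_binl A B D (f : HomC (SO S B) D) :
  f ∘ SM S (@bprr C A B) ∘ SM S binl = 0.
Proof. by rewrite -Defs.compA SM_bprr_binl comp0r. Qed.

End Suspension.

Ltac hom_normalize := repeat progress rewrite ?Defs.compDl ?Defs.compDr
  ?compNl ?compNr ?comp0l ?comp0r ?Defs.compA
  ?bprl_inl ?bprr_inr ?bprl_inr ?bprr_inl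
  ?comp_bprl_binl ?comp_bprl_binr ?comp_bprr_binr ?comp_bprr_binl
  ?SM_bprl_binl ?SM_bprl_binr ?SM_bprr_binr ?SM_bprr_binl
  ?comp_SM_bprl_binl ?comp_SM_bprl_binr ?comp_SM_bprr_binr ?comp_SM_bprr_binl
  ?Defs.comp1f ?Defs.compf1 ?addr0 ?add0r ?oppr0 ?opprK.

Section BlockMatrices.
Local Open Scope ring_scope.
Variable C : addcat.
Implicit Types A B D E : C.

Definition twist A B (s : bool) : HomC (bsum A B) (bsum A B) :=
  mat (sgn s (idm A)) 0 0 (idm B).

Lemma twist0 A B : twist A B false = idm _.
Proof. by rewrite /twist /mat /= !Defs.comp1f !comp0l addr0 add0r bsum_id. Qed.

Lemma twistK A B s : twist A B s ∘ twist A B s = idm _.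
Proof.
by apply: hom_bsum_ext; apply: bsum_hom_ext; rewrite /twist /mat /sgn; case: s; hom_normalize.
Qed.

Lemma twist_mat A A' B B' s (a : HomC A A') (p : HomC A B') (b : HomC B B') :
  twist A' B' (~~ s) ∘ mat a 0 (sgn s p) b = mat (- a) 0 p b ∘ twist A B s.
Proof.
by apply: hom_bsum_ext; apply: bsum_hom_ext; rewrite /twist /mat /sgn; case: s; hom_normalize.
Qed.

Lemma twist_matN A A' B B' s (a : HomC A A') (p : HomC A B') (b : HomC B B') :
  twist A' B' (~~ s) ∘ mat (- a) 0 p b = mat a 0 (sgn s p) b ∘ twist A B s.
Proof.
by apply: hom_bsum_ext; apply: bsum_hom_ext; rewrite /twist /mat /sgn; case: s; hom_normalize.
Qed.

End BlockMatrices.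

Lemma interval_cases (a b : nat) (P : nat -> Prop) :
  P a -> P b -> (forall i, a < i < b -> P i) -> forall i, a <= i <= b -> P i.
Proof.
move=> Pa Pb Pmid i /andP[a_le i_le].
have [->|i_neqa] := eqVneq i a => //; have [->|i_neqb] := eqVneq i b => //.
by apply: Pmid; rewrite !ltn_neqAle eq_sym i_neqa i_neqb a_le i_le.
Qed.

Section NangleComposites.
Variables (C : addcat) (S : autom C) (m : nat) (N : nSseq S m.+3 -> Prop).
Hypothesis HN : nangulated N.

Lemma nangle_smor21_eq0 X : N X -> smor X 2 ∘ smor X 1 = 0%R.
Proof.
move=> NX.
have [|psi [_ psi2 [psi_sq _]]] :=
  N3 HN (N1b HN (sob X 1)) NX (f1 := idm (sob X 1)) (f2 := smor X 1).
  by rewrite /= castH_id Defs.compf1.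
by have := psi_sq 2 erefl; rewrite /= comp0r psi2.
Qed.

Lemma nangle_slst_smor_eq0 Y : N Y -> slst Y ∘ smor Y m.+2 = 0%R.
Proof.
move=> NY.
have Nrot : N (Defs.rot (triv S m.+3 (sob Y 1))) by apply: (proj1 (N2 HN _)); apply: (N1b HN).
have [|psi [psi1 _ [psi_sq psi_last]]] :=
  N3 HN NY Nrot (f1 := idm (sob Y 1)) (f2 := 0%R).
  by rewrite comp0l /= castH0 comp0l.
have := psi_sq m.+2; rewrite leqnn /= ltnn eqxx castH0 comp0l => /(_ isT) psi_n0.
move: psi_last; rewrite psi1 SM_id Defs.comp1f => ->.
by rewrite -Defs.compA psi_n0 comp0r.
Qed.

End NangleComposites.

Section ConeSummand.
Variables (C : addcat) (S : autom C) (m : nat) (X Y : nSseq S m.+3).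
Variable phi : forall i, HomC (sob X i) (sob Y i).
Hypotheses (eYX : sob Y 1 = sob X 1) (phi1 : phi 1 = castH (idm (sob X 1))).
Hypothesis phi_morph : is_morph phi.
Hypotheses (alpha21 : smor X 2 ∘ smor X 1 = 0%R)
  (beta_last : slst Y ∘ smor Y m.+2 = 0%R).

Local Notation L := (l4seq phi).
Local Notation K := (cone phi).

Definition phi1_inv : HomC (sob Y 1) (sob X 1) := castH (idm (sob Y 1)).

Lemma phi1K : phi1_inv ∘ phi 1 = idm _.
Proof. by rewrite phi1 castH_idmK. Qed.

Lemma phi1_invK : phi 1 ∘ phi1_inv = idm _.
Proof. by rewrite phi1 castH_idmK. Qed.

Lemma comp_SM_phi1_invK D (f : HomC (SO S (sob Y 1)) D) :
  f ∘ SM S (phi 1) ∘ SM S phi1_inv = f.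
Proof. by rewrite -Defs.compA -SM_comp phi1_invK SM_id Defs.compf1. Qed.

Lemma comp_SM_phi1K D (f : HomC (SO S (sob X 1)) D) :
  f ∘ SM S phi1_inv ∘ SM S (phi 1) = f.
Proof. by rewrite -Defs.compA -SM_comp phi1K SM_id Defs.compf1. Qed.

Lemma castH_slstY :
  (castH (slst Y) : HomC (sob Y m.+3) (SO S (sob X 1))) = SM S phi1_inv ∘ slst Y.
Proof. by rewrite (castH_compl _ (f_equal (SO S) eYX)) SM_castH // SM_id. Qed.

Lemma smorY1E : phi 2 ∘ smor X 1 ∘ phi1_inv = smor Y 1.
Proof. by rewrite (proj1 phi_morph) // -Defs.compA phi1_invK Defs.compf1. Qed.

Lemma slstXE : SM S phi1_inv ∘ slst Y ∘ phi m.+3 = slst X.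
Proof.
rewrite -Defs.compA -(proj2 phi_morph) Defs.compA -SM_comp phi1K.
by rewrite SM_id Defs.comp1f.
Qed.

Lemma slstY_smor_eq0 : SM S phi1_inv ∘ slst Y ∘ smor Y m.+2 = 0%R.
Proof. by rewrite -Defs.compA beta_last comp0r. Qed.

Lemma l4ob_mid i : 1 < i <= m.+2 -> l4ob X Y i = bsum (sob X i.+1) (sob Y i).
Proof. by case/andP=> i_gt1 i_le; rewrite /l4ob gtn_eqF // i_le. Qed.

Lemma cob_mid i : i <= m.+2 -> cob X Y i = bsum (sob X i.+1) (sob Y i).
Proof. by rewrite /cob => ->. Qed.

Definition l4_to_cone i : HomC (sob L i) (sob K i) :=
  if i == 1 then castH (@binl C (sob X 2) (sob Y 1))
  else if i <= m.+2 then castH (twist (sob X i.+1) (sob Y i) (odd i))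
  else castH ((binr - binl ∘ (SM S phi1_inv ∘ slst Y))%R
                : HomC (sob Y m.+3) (bsum (SO S (sob X 1)) (sob Y m.+3))).

Definition cone_to_l4 i : HomC (sob K i) (sob L i) :=
  if i == 1 then castH ((bprl + smor X 1 ∘ phi1_inv ∘ bprr)%R
                          : HomC (bsum (sob X 2) (sob Y 1)) (sob X 2))
  else if i <= m.+2 then castH (twist (sob X i.+1) (sob Y i) (odd i))
  else castH (@bprr C (SO S (sob X 1)) (sob Y m.+3)).

Lemma l4_to_cone_first : l4_to_cone 2 ∘ smor L 1 = smor K 1 ∘ l4_to_cone 1.
Proof.
rewrite /l4_to_cone /= !castH_comp //; congr castH.
by rewrite twist0 Defs.comp1f; apply: hom_bsum_ext; rewrite /mat; hom_normalize.
Qed.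

Lemma l4_to_cone_mid i : 1 < i < m.+2 ->
  l4_to_cone i.+1 ∘ smor L i = smor K i ∘ l4_to_cone i.
Proof.
case/andP=> i_gt1 i_lt; have i_le := ltnW i_lt.
rewrite /l4_to_cone /= (gtn_eqF i_gt1) (gtn_eqF (ltnW i_gt1 : 1 < i.+1)) i_lt i_le.
rewrite !castH_comp; try by rewrite ?l4ob_mid ?cob_mid ?i_gt1 //= ltnW.
by congr castH; rewrite twist_mat.
Qed.

Lemma l4_to_cone_penult :
  l4_to_cone m.+3 ∘ smor L m.+2 = smor K m.+2 ∘ l4_to_cone m.+2.
Proof.
rewrite /l4_to_cone /= ltnn eqxx leqnn castH_id !negbK.
rewrite !castH_comp; try by rewrite /l4ob /cob /= ?ltnn ?leqnn.
congr castH; apply: hom_bsum_ext; apply: bsum_hom_ext;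
  rewrite /twist /mat /sgn; case: (odd m); hom_normalize;
  by rewrite ?slstXE ?slstY_smor_eq0 ?oppr0.
Qed.

Lemma l4_to_cone_last :
  SM S (l4_to_cone 1) ∘ slst L = slst K ∘ l4_to_cone m.+3.
Proof.
rewrite /l4_to_cone /= ltnn castH_slstY SM_castH // !castH_comp;
  try by rewrite /l4ob /cob /= ?ltnn.
congr castH; rewrite /clst0; hom_normalize.
by rewrite comp_SM_phi1_invK subrr addr0.
Qed.

Lemma cone_to_l4_first : cone_to_l4 2 ∘ smor K 1 = smor L 1 ∘ cone_to_l4 1.
Proof.
rewrite /cone_to_l4 /= !castH_comp //; congr castH; rewrite twist0 Defs.comp1f.
apply: hom_bsum_ext; apply: bsum_hom_ext; rewrite /mat; hom_normalize;
  by rewrite ?alpha21 ?smorY1E ?comp0l ?oppr0.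
Qed.

Lemma cone_to_l4_mid i : 1 < i < m.+2 ->
  cone_to_l4 i.+1 ∘ smor K i = smor L i ∘ cone_to_l4 i.
Proof.
case/andP=> i_gt1 i_lt; have i_le := ltnW i_lt.
rewrite /cone_to_l4 /= (gtn_eqF i_gt1) (gtn_eqF (ltnW i_gt1 : 1 < i.+1)) i_lt i_le.
rewrite !castH_comp; try by rewrite ?l4ob_mid ?cob_mid ?i_gt1 //= ltnW.
by congr castH; rewrite twist_matN.
Qed.

Lemma cone_to_l4_penult :
  cone_to_l4 m.+3 ∘ smor K m.+2 = smor L m.+2 ∘ cone_to_l4 m.+2.
Proof.
rewrite /cone_to_l4 /= ltnn eqxx leqnn castH_id !negbK.
rewrite !castH_comp; try by rewrite /l4ob /cob /= ?ltnn ?leqnn.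
congr castH; apply: bsum_hom_ext;
  rewrite /twist /mat /sgn; case: (odd m); hom_normalize;
  by rewrite ?slstXE ?slstY_smor_eq0 ?oppr0.
Qed.

Lemma cone_to_l4_last :
  SM S (cone_to_l4 1) ∘ slst K = slst L ∘ cone_to_l4 m.+3.
Proof.
rewrite /cone_to_l4 /= ltnn castH_slstY SM_castH // !castH_comp;
  try by rewrite /l4ob /cob /= ?ltnn.
congr castH; apply: bsum_hom_ext; rewrite /clst0 SM_add !SM_comp; hom_normalize;
  by rewrite ?comp_SM_phi1K ?addNr.
Qed.

Lemma cone_to_l4K i : 1 <= i <= m.+3 -> cone_to_l4 i ∘ l4_to_cone i = idm _.
Proof.
move: i; apply: (@interval_cases 1 m.+3 (fun i => cone_to_l4 i ∘ l4_to_cone i = idm _))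
  => [|| i /andP[i_gt1 i_le]].
- by rewrite /cone_to_l4 /l4_to_cone /= castH_comp // castH_id; hom_normalize.
- rewrite /cone_to_l4 /l4_to_cone /= ltnn castH_comp;
    try by rewrite /l4ob /cob /= ?ltnn.
  by apply: castH_idmE; [rewrite /l4ob /= ltnn | hom_normalize].
- have i_mid : 1 < i <= m.+2 by rewrite i_gt1.
  rewrite /cone_to_l4 /l4_to_cone (gtn_eqF i_gt1) (i_le : i <= m.+2).
  have eL : sob L i = bsum (sob X i.+1) (sob Y i) := l4ob_mid i_mid.
  have eK : sob K i = bsum (sob X i.+1) (sob Y i) := cob_mid i_le.
  by rewrite castH_comp ?eL ?eK //; apply: castH_idmE; rewrite ?eL ?twistK.
Qed.

Lemma l4_to_cone_morph : is_morph l4_to_cone.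
Proof.
split; last exact: l4_to_cone_last.
exact: interval_cases l4_to_cone_first l4_to_cone_penult l4_to_cone_mid.
Qed.

Lemma cone_to_l4_morph : is_morph cone_to_l4.
Proof.
split; last exact: cone_to_l4_last.
exact: interval_cases cone_to_l4_first cone_to_l4_penult cone_to_l4_mid.
Qed.

Lemma l4seq_summand_cone : summand L K.
Proof.
exists l4_to_cone, cone_to_l4; split.
- exact: l4_to_cone_morph.
- exact: cone_to_l4_morph.
- exact: cone_to_l4K.
Qed.

End ConeSummand.

Theorem lemma4p1 (C : addcat) (S : autom C) (n : nat)
    (N : nSseq S n -> Prop) :
  3 <= n -> nangulated N ->
  forall (X Y : nSseq S n), N X -> N Y ->
  sob Y 1 = sob X 1 ->
  forall phi : forall i, HomC (sob X i) (sob Y i),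
    phi 1 = castH (idm (sob X 1)) ->
    is_morph phi ->
    N (cone phi) ->
    N (l4seq phi).
Proof.
case: n N => [|[|[|m]]] N // _ HN X Y NX NY eYX phi phi1 phi_morph Ncone.
apply: (N1a_summand HN Ncone).
exact: l4seq_summand_cone eYX phi1 phi_morph
  (nangle_smor21_eq0 HN NX) (nangle_slst_smor_eq0 HN NY).
Qed.
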